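(* Let $N_0$ be a positive integer, $z\in\mathbb{C}$, $\nu\in[0,1/N_0]$, $0<b<1$, and assume that for all $t\in[b,1]$ we have $|1-tz|\le C$ for some constant $C<1$. Let $\theta = \arctan\left(\pi/|\log C|\right)$. If $m\ge1$ is an integer with $m\theta+2\pi/N_0\le\pi/2$, then the real part and the imaginary part of $\log^m(1-tz)\,(1-tz)^{-2\nu}$ each do not change sign for $t\in[b,1]$.
   Context: $\log$ and complex powers are taken with the principal branch, i.e. $(1-tz)^{-2\nu} = \exp(-2\nu\log(1-tz))$. *)

From Stdlib Require Import Reals Lra.
From Coquelicot Require Import Coquelicot.
Open Scope R_scope.

(* Principal argument, with values in (-PI, PI]; Arg 0 = 0 (never used at 0). *)
Definition Arg (w : C) : R :=
  let x := Re w in let y := Im w in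
  if Rlt_dec 0 x then atan (y / x)
  else if Rlt_dec x 0 then
    (if Rle_dec 0 y then atan (y / x) + PI else atan (y / x) - PI)
  else if Rlt_dec 0 y then PI / 2
  else if Rlt_dec y 0 then - (PI / 2)
  else 0.

Definition Clog (w : C) : C := (ln (Cmod w), Arg w).

Definition Cexp (w : C) : C :=
  (exp (Re w) * cos (Im w), exp (Re w) * sin (Im w)).

Definition Cpow_princ (w s : C) : C := Cexp (Cmult s (Clog w)).

Fixpoint Cpown (w : C) (m : nat) : C :=
  match m with
  | O => RtoC 1
  | S k => Cmult w (Cpown w k)
  end.

Definition no_sign_change (f : R -> R) (b : R) : Prop :=
  (forall t, b <= t <= 1 -> 0 <= f t) \/ (forall t, b <= t <= 1 -> f t <= 0).

(* Write Log w = a + iβ with a = ln|w| <= ln C < 0 and |β| <= π.  Then Log w = r e^{-iφ}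
   with r <= 0 and φ = atan (β / -a), so |φ| <= θ and φ has the sign of β.  Hence
   (-1)^m Log^m w · w^{-2ν} = ρ e^{-iψ} with ρ >= 0 and ψ = mφ + 2νβ, where
   |ψ| <= mθ + 2π/N0 <= π/2: the real part has the fixed sign (-1)^m and the imaginary
   part the sign of -(-1)^m β.  Since Im (1 - tz) = -t Im z, β keeps one sign for t > 0. *)

From Stdlib Require Import Reals Lra Lia.
From Coquelicot Require Import Coquelicot.
Open Scope R_scope.

Lemma atan_le x y : x <= y -> atan x <= atan y.
Proof. intros [Hlt | ->]; [left; apply atan_increasing |]; lra. Qed.

Definition polar (r u : R) : C := (r * cos u, r * sin u).

Lemma Cmult_polar r u s v : Cmult (polar r u) (polar s v) = polar (r * s) (u + v).
Proof. unfold polar, Cmult; simpl; rewrite cos_plus, sin_plus; f_equal; ring. Qed.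

Lemma Cpown_polar r u m : Cpown (polar r u) m = polar (r ^ m) (INR m * u).
Proof.
  induction m as [| k IH]; simpl Cpown.
  - unfold polar; rewrite Rmult_0_l, cos_0, sin_0; unfold RtoC; f_equal; ring.
  - rewrite IH, Cmult_polar, S_INR; simpl pow; f_equal; ring.
Qed.

Lemma Cpow_princ_real w s :
  Cpow_princ w (RtoC s) = polar (exp (s * ln (Cmod w))) (s * Arg w).
Proof.
  unfold Cpow_princ, Cexp, Clog, Cmult, polar, RtoC; simpl.
  replace (s * ln (Cmod w) - 0 * Arg w) with (s * ln (Cmod w)) by ring.
  replace (s * Arg w + 0 * ln (Cmod w)) with (s * Arg w) by ring.
  reflexivity.
Qed.

Lemma Arg_0 : Arg 0 = 0.
Proof. unfold Arg; simpl; repeat destruct Rlt_dec; lra. Qed.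

Lemma atan_nonneg x : 0 <= x -> 0 <= atan x.
Proof. intros Hx; rewrite <- atan_0; now apply atan_le. Qed.

Lemma atan_nonpos x : x <= 0 -> atan x <= 0.
Proof. intros Hx; rewrite <- atan_0; now apply atan_le. Qed.

Lemma Arg_bound w : - PI <= Arg w <= PI.
Proof.
  pose proof PI_RGT_0; unfold Arg; destruct w as [x y]; simpl.
  pose proof (atan_bound (y / x)).
  destruct (Rlt_dec 0 x); [lra |].
  destruct (Rlt_dec x 0) as [Hx |]; [| repeat destruct Rlt_dec; lra].
  assert (/ x < 0) by now apply Rinv_lt_0_compat.
  destruct (Rle_dec 0 y).
  - assert (atan (y / x) <= 0) by (apply atan_nonpos; unfold Rdiv; nra); lra.
  - assert (0 <= atan (y / x)) by (apply atan_nonneg; unfold Rdiv; nra); lra.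
Qed.

Lemma Arg_nonneg w : 0 <= Im w -> 0 <= Arg w.
Proof.
  pose proof PI_RGT_0; unfold Arg; destruct w as [x y]; simpl; intros Hy.
  pose proof (atan_bound (y / x)).
  destruct (Rlt_dec 0 x) as [Hx |].
  - apply atan_nonneg; assert (0 < / x) by now apply Rinv_0_lt_compat.
    unfold Rdiv; nra.
  - repeat destruct Rlt_dec; repeat destruct Rle_dec; lra.
Qed.

Lemma Arg_nonpos w : Im w < 0 -> Arg w <= 0.
Proof.
  pose proof PI_RGT_0; unfold Arg; destruct w as [x y]; simpl; intros Hy.
  pose proof (atan_bound (y / x)).
  destruct (Rlt_dec 0 x) as [Hx |].
  - apply atan_nonpos; assert (0 < / x) by now apply Rinv_0_lt_compat.
    unfold Rdiv; nra.
  - repeat destruct Rlt_dec; repeat destruct Rle_dec; lra.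
Qed.

Lemma polar_left_halfplane a β K :
  a <= 0 -> 0 <= K -> - (K * - a) <= β <= K * - a ->
  exists r φ, r <= 0 /\ - atan K <= φ <= atan K /\
    (0 <= β -> 0 <= φ) /\ (β <= 0 -> φ <= 0) /\ (a, β) = polar r (- φ) :> C.
Proof.
  intros Ha HK Hβ.
  pose proof (atan_nonneg K HK).
  destruct (Req_dec a 0) as [-> | Ha0].
  { assert (β = 0) as -> by nra.
    exists 0, 0; unfold polar; repeat split; try lra; f_equal; ring. }
  set (q := β / - a).
  assert (Hq : β = q * - a) by (unfold q; field; lra).
  assert (Hqb : - K <= q <= K) by (split; nra).
  set (φ := atan q).
  pose proof (atan_bound q) as Hφ; fold φ in Hφ.
  assert (Hcos : 0 < cos φ) by (apply cos_gt_0; lra).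
  exists (a / cos φ), φ; repeat split.
  - apply Rmult_le_0_r; [lra | left; now apply Rinv_0_lt_compat].
  - rewrite <- atan_opp; apply atan_le; lra.
  - apply atan_le; lra.
  - intros; apply atan_nonneg; nra.
  - intros; apply atan_nonpos; nra.
  - unfold polar; rewrite cos_neg, sin_neg; f_equal.
    + field; lra.
    + pose proof (tan_atan q) as Htan; fold φ in Htan; unfold tan in Htan.
      rewrite Hq, <- Htan; field; lra.
Qed.

Lemma Clog_pow_Cpow_sign (w : C) (nu K B : R) (m : nat) :
  ln (Cmod w) <= 0 -> 0 <= K -> - (K * - ln (Cmod w)) <= Arg w <= K * - ln (Cmod w) ->
  0 <= nu -> 2 * nu * PI <= B -> INR m * atan K + B <= PI / 2 ->
  let F := Cmult (Cpown (Clog w) m) (Cpow_princ w (RtoC (- (2 * nu)))) in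
  0 <= (-1) ^ m * Re F /\ (0 <= Arg w -> (-1) ^ m * Im F <= 0) /\
  (Arg w <= 0 -> 0 <= (-1) ^ m * Im F).
Proof.
  intros Ha HK HArg Hnu HB Hangle F.
  destruct (polar_left_halfplane _ _ _ Ha HK HArg) as (r & φ & Hr & Hφ & Hφpos & Hφneg & Hlog).
  set (β := Arg w) in *.
  set (ρ := (- r) ^ m * exp (- (2 * nu) * ln (Cmod w))).
  set (ψ := INR m * φ + 2 * nu * β).
  assert (HF : (-1) ^ m * Re F = ρ * cos ψ /\ (-1) ^ m * Im F = - (ρ * sin ψ)).
  { unfold F, ρ; change (ln (Cmod w), β) with (Clog w) in Hlog.
    rewrite Hlog, Cpown_polar, Cpow_princ_real, Cmult_polar; fold β.
    replace (INR m * - φ + - (2 * nu) * β) with (- ψ) by (unfold ψ; ring).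
    replace ((- r) ^ m) with ((-1) ^ m * r ^ m) by (rewrite <- Rpow_mult_distr; f_equal; ring).
    unfold polar; simpl; rewrite cos_neg, sin_neg; split; ring. }
  assert (Hρ : 0 <= ρ).
  { apply Rmult_le_pos; [apply pow_le; lra | left; apply exp_pos]. }
  pose proof (Arg_bound w) as Hβ; fold β in Hβ.
  pose proof (pos_INR m); pose proof PI_RGT_0.
  assert (- (INR m * atan K) <= INR m * φ <= INR m * atan K) by (split; nra).
  assert (- B <= 2 * nu * β <= B) by (split; nra).
  assert (Hψ : - (PI / 2) <= ψ <= PI / 2) by (unfold ψ; lra).
  destruct HF as [-> ->]; repeat split.
  - apply Rmult_le_pos; [lra | apply cos_ge_0; lra].
  - intros Hsgn; assert (0 <= sin ψ) by (apply sin_ge_0; unfold ψ in *; nra); nra.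
  - intros Hsgn; assert (0 <= sin (- ψ)) by (apply sin_ge_0; unfold ψ in *; nra).
    rewrite sin_neg in *; nra.
Qed.

(* Stdlib's [ln] returns [0] on nonpositive arguments, so no positivity hypothesis is needed. *)
Lemma ln_le_0 x : x <= 1 -> ln x <= 0.
Proof.
  intros Hx; destruct (Rlt_dec 0 x) as [Hpos | Hnpos].
  - rewrite <- ln_1; now apply ln_le.
  - unfold ln; destruct Rlt_dec; [contradiction | lra].
Qed.

Lemma PI_div_abs_nonneg x : 0 <= PI / Rabs x.
Proof.
  pose proof PI_RGT_0; unfold Rdiv; apply Rmult_le_pos; [lra |].
  destruct (Rle_lt_or_eq_dec 0 (Rabs x) (Rabs_pos x)) as [Hpos | <-].
  - left; now apply Rinv_0_lt_compat.
  - rewrite Rinv_0; lra.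
Qed.

Lemma Arg_le_ln_Cmod (w : C) (c : R) : Cmod w <= c < 1 ->
  let K := PI / Rabs (ln c) in
  - (K * - ln (Cmod w)) <= Arg w <= K * - ln (Cmod w).
Proof.
  intros [Hwc Hc1] K.
  assert (HK : 0 <= K) by apply PI_div_abs_nonneg.
  destruct (Req_dec (Cmod w) 0) as [Hw0 | Hw0].
  - rewrite (Cmod_eq_0 w Hw0), Arg_0, Cmod_0.
    pose proof (ln_le_0 0 ltac:(lra)); split; nra.
  - assert (Hw : 0 < Cmod w) by (pose proof (Cmod_ge_0 w); lra).
    assert (Hlnc : ln c < 0) by (rewrite <- ln_1; apply ln_increasing; lra).
    assert (Hlnw : ln (Cmod w) <= ln c) by now apply ln_le.
    assert (HKc : K * - ln c = PI) by (unfold K; rewrite Rabs_left by lra; field; lra).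
    pose proof (Arg_bound w); split; nra.
Qed.

Lemma Arg_sign_on_ray (z : C) :
  (forall t, 0 < t -> 0 <= Arg (Cminus (RtoC 1) (Cmult (RtoC t) z))) \/
  (forall t, 0 < t -> Arg (Cminus (RtoC 1) (Cmult (RtoC t) z)) <= 0).
Proof.
  destruct z as [x y]; destruct (Rlt_dec 0 y); [right | left]; intros t Ht;
    [apply Arg_nonpos | apply Arg_nonneg]; simpl; nra.
Qed.

Lemma no_sign_change_scale (s : R) (f : R -> R) (b : R) :
  s <> 0 -> no_sign_change (fun t => s * f t) b -> no_sign_change f b.
Proof.
  unfold no_sign_change; intros Hs Hsf.
  destruct (Rlt_dec 0 s); destruct Hsf as [Hsf | Hsf];
    [left | right | right | left]; intros t Ht; specialize (Hsf t Ht); nra.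
Qed.

Theorem lemmaB4 (N0 : nat) (z : C) (nu b Cst : R) (m : nat) :
  (0 < N0)%nat ->
  0 <= nu <= 1 / INR N0 ->
  0 < b < 1 ->
  Cst < 1 ->
  (forall t, b <= t <= 1 -> Cmod (Cminus (RtoC 1) (Cmult (RtoC t) z)) <= Cst) ->
  (1 <= m)%nat ->
  INR m * atan (PI / Rabs (ln Cst)) + 2 * PI / INR N0 <= PI / 2 ->
  let f := fun t : R =>
    Cmult (Cpown (Clog (Cminus (RtoC 1) (Cmult (RtoC t) z))) m)
          (Cpow_princ (Cminus (RtoC 1) (Cmult (RtoC t) z)) (RtoC (- (2 * nu)))) in
  no_sign_change (fun t => Re (f t)) b /\ no_sign_change (fun t => Im (f t)) b.
Proof.
  intros HN0 Hnu Hb HCst Hmod _ Hangle f.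
  assert (HB : 2 * nu * PI <= 2 * PI / INR N0).
  { assert (0 < INR N0) by (apply lt_0_INR; lia).
    replace (2 * PI / INR N0) with (2 * PI * (1 / INR N0)) by (field; lra).
    pose proof PI_RGT_0; destruct Hnu as [_ Hnu]; nra. }
  assert (Hf : forall t, b <= t <= 1 ->
    let w := Cminus (RtoC 1) (Cmult (RtoC t) z) in
    0 <= (-1) ^ m * Re (f t) /\ (0 <= Arg w -> (-1) ^ m * Im (f t) <= 0) /\
    (Arg w <= 0 -> 0 <= (-1) ^ m * Im (f t))).
  { intros t Ht w.
    assert (Hw : Cmod w <= Cst < 1) by (split; [now apply Hmod | lra]).
    apply (Clog_pow_Cpow_sign w nu _ _ m (ln_le_0 (Cmod w) ltac:(lra)) (PI_div_abs_nonneg _)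
             (Arg_le_ln_Cmod w Cst Hw) (proj1 Hnu) HB Hangle). }
  assert (Hsign : (-1) ^ m <> 0) by (apply pow_nonzero; lra).
  split; apply (no_sign_change_scale _ _ _ Hsign).
  - left; intros t Ht; apply (Hf t Ht).
  - destruct (Arg_sign_on_ray z) as [Hray | Hray]; [right | left];
      intros t Ht; apply (Hf t Ht), Hray; lra.
Qed.
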